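(* Let $G$ be a graph of order $n\ge 9$ with twin number $\tau$, and let $W$ be a $\tau$-set. Then $\beta_p(G)=n-1$ if and only if either (i) $\tau=n-1$, or (ii) $\tau=n-2$ and $G[W]\cong K_{n-2}$.
   Context: All graphs are finite, simple, undirected and connected. Two vertices $u,v$ are twins if $N(u)\setminus\{v\}=N(v)\setminus\{u\}$; the twin number $\tau(G)$ is the maximum cardinality of an equivalence class of the twin relation; a $\tau$-set is a set of pairwise twin vertices of cardinality $\tau(G)$. For a partition $\Pi=\{S_1,\dots,S_k\}$ of $V(G)$, $r(u|\Pi)=(d(u,S_1),\dots,d(u,S_k))$ with $d(u,S)=\min_{w\in S}d(u,w)$; $\Pi$ is locating if $r(u|\Pi)\ne r(v|\Pi)$ for all distinct $u,v$; $\beta_p(G)$ is the minimum size of a locating partition. *)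

From mathcomp Require Import all_boot.
Set Implicit Arguments. Unset Strict Implicit. Unset Printing Implicit Defensive.

Section Graph.
Variables (T : finType) (e : rel T).

Definition simple_graph : Prop := symmetric e /\ irreflexive e.
Definition graph_connected : Prop := forall u v : T, connect e u v.

Fixpoint within (n : nat) (u v : T) : bool :=
  match n with
  | 0 => u == v
  | n'.+1 => within n' u v || [exists w, within n' u w && e w v]
  end.

(* shortest-path distance (for connected graphs it is < #|T|) *)
Definition dist (u v : T) : nat := find (fun k => within k u v) (iota 0 #|T|).

Definition dist_set (u : T) (S : {set T}) : nat :=
  \big[minn/#|T|]_(w in S) dist u w.

Definition locating (P : {set {set T}}) : bool :=
  partition P [set: T] &&
  [forall u, forall v, (u != v) ==> [exists S in P, dist_set u S != dist_set v S]].

Definition beta_p : nat :=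
  find (fun k => [exists P : {set {set T}}, locating P && (#|P| == k)]) (iota 0 #|T|.+1).

Definition nbhd (u : T) : {set T} := [set w | e u w].
Definition twins (u v : T) : bool := (nbhd u :\ v) == (nbhd v :\ u).

Definition twin_number : nat := \max_(u : T) #|[set v | twins u v]|.

Definition tau_set (W : {set T}) : Prop :=
  (forall u v, u \in W -> v \in W -> twins u v) /\ #|W| = twin_number.

Definition induces_complete (W : {set T}) : Prop :=
  forall u v, u \in W -> v \in W -> u != v -> e u v.

End Graph.

(* Twins lie in distinct blocks of every locating partition, so tau <= beta_p.
   On the other hand, if a vertex w is adjacent to exactly one of a, b, then
   merging a and b and keeping all other blocks singletons is locating, so
   beta_p <= n - 1 whenever G is not complete, and beta_p <= n - 2 if there are
   two disjoint such pairs whose distinguishing vertices lie outside both.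
   Thus beta_p = n - 1 forces every vertex to have at most one neighbour or at
   most one non-neighbour (two of each would give two pairs distinguished by
   that vertex). With a leaf l, its neighbour h dominates G and either
   G is a star (tau = n - 1) or G - {l, h} is a clique of n - 2 mutual twins;
   without leaves, the only non-edge is a single pair {a, a'} and G - {a, a'}
   is such a clique. Conversely, if W is a clique of n - 2 twins, a locating
   partition with n - 2 blocks would put one vertex of W in each block, and a
   common neighbour of W could not be told apart from the W-vertex of its block. *)

From mathcomp Require Import all_boot zify.
Set Implicit Arguments. Unset Strict Implicit. Unset Printing Implicit Defensive.

Lemma bigminn_le (I : finType) (S : {set I}) (F : I -> nat) m i :
  i \in S -> \big[minn/m]_(j in S) F j <= F i.
Proof.
move=> iS; rewrite -big_filter.
have : i \in [seq j <- index_enum I | j \in S] by rewrite mem_filter iS mem_index_enum.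
elim: [seq j <- _ | _] => [|j s IH] //; rewrite inE big_cons => /orP[/eqP <-|is_i].
  exact: geq_minl.
exact: leq_trans (geq_minr _ _) (IH is_i).
Qed.

Lemma exists_notin (T : finType) (s : seq T) : size s < #|T| -> exists y, y \notin s.
Proof.
move=> s_small; apply/existsP; rewrite -negb_forall; apply: contraTN s_small.
move=> /forallP s_full; rewrite -leqNgt; apply: leq_trans (card_size s).
by apply: subset_leq_card; apply/subsetP => y _; exact: s_full.
Qed.

Lemma cardsC2 (T : finType) (p q : T) : p != q -> #|~: [set p; q]| = #|T| - 2.
Proof. by move=> pq; rewrite -(cardsC [set p; q]) cards2 pq addKn. Qed.

Section Distances.
Variables (T : finType) (e : rel T).

Lemma within_edge k x y : e x y -> within e k.+1 x y.
Proof.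
move=> exy; elim: k => [|k IH]; last by apply/orP; left.
by apply/orP; right; apply/existsP; exists x; rewrite eqxx.
Qed.

Lemma within1 x y : within e 1 x y = (x == y) || e x y.
Proof.
congr orb; apply/existsP/idP => [[w /andP[/eqP <-]] | exy] //.
by exists x; rewrite eqxx.
Qed.

Lemma dist_xx x : dist e x x = 0.
Proof. by rewrite /dist; case: #|T| => [|n] //=; rewrite eqxx. Qed.

Lemma dist_gt0 x y : x != y -> 0 < dist e x y.
Proof.
move=> /negbTE xy; have : 0 < #|T| by apply/card_gt0P; exists x.
by rewrite /dist; case: #|T| => [|n] //= _; rewrite xy.
Qed.

Lemma dist_edge x y : x != y -> e x y -> dist e x y = 1.
Proof.
move=> xy exy; have : 1 < #|T| by apply/card_gt1P; exists x, y.
rewrite /dist; case: #|T| => [|[|n]] //= _.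
by rewrite -[_ || _]/(within e 1 x y) within1 (negbTE xy) exy.
Qed.

Lemma dist_gt1 x y : x != y -> ~~ e x y -> 1 < dist e x y.
Proof.
move=> xy nexy; have : 1 < #|T| by apply/card_gt1P; exists x, y.
rewrite /dist; case: #|T| => [|[|n]] //= _.
by rewrite -[_ || _]/(within e 1 x y) within1 (negbTE xy) (negbTE nexy).
Qed.

Lemma dist_le_card x y : dist e x y <= #|T|.
Proof. by rewrite /dist -[X in _ <= X](size_iota 0); exact: find_size. Qed.

Lemma dist_set_le x (S : {set T}) w : w \in S -> dist_set e x S <= dist e x w.
Proof. exact: bigminn_le. Qed.

Lemma dist_set_in x (S : {set T}) : x \in S -> dist_set e x S = 0.
Proof. by move=> xS; apply/eqP; rewrite -leqn0 -(dist_xx x) dist_set_le. Qed.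

Lemma dist_set_gt0 x (S : {set T}) : x \notin S -> 0 < dist_set e x S.
Proof.
move=> xS; apply: (big_ind (fun k => 0 < k)).
- by apply/card_gt0P; exists x.
- by move=> a b a_gt0 b_gt0; rewrite leq_min a_gt0 b_gt0.
by move=> w wS; apply: dist_gt0; apply: contraNneq xS => ->.
Qed.

Lemma dist_set_edge x y (S : {set T}) : x \notin S -> y \in S -> e x y -> dist_set e x S = 1.
Proof.
move=> xS yS exy; apply/eqP; rewrite eqn_leq dist_set_gt0 // andbT.
rewrite -(@dist_edge x y) ?dist_set_le //.
by apply: contraNneq xS => ->.
Qed.

Lemma dist_set1 x w : dist_set e x [set w] = dist e x w.
Proof. by rewrite /dist_set big_set1E; apply/minn_idPl; exact: dist_le_card. Qed.

End Distances.

Section Twins.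
Variables (T : finType) (e : rel T).

Lemma twinsC u v : twins e u v = twins e v u.
Proof. by rewrite /twins eq_sym. Qed.

Lemma twins_edge u v w : twins e u v -> w != u -> w != v -> e u w = e v w.
Proof. by move=> /eqP/setP/(_ w); rewrite !inE => + wu wv; rewrite wu wv. Qed.

Lemma twinsP u v : irreflexive e ->
  reflect (forall w, w != u -> w != v -> e u w = e v w) (twins e u v).
Proof.
move=> e_irr; apply: (iffP idP) => [tw w|same_nbrs]; first exact: twins_edge.
apply/eqP/setP => w; rewrite !inE.
have [->|wu] := eqVneq w u; first by rewrite e_irr andbF.
have [->|wv] := eqVneq w v; first by rewrite e_irr andbF.
exact: same_nbrs.
Qed.

Lemma twins_within u v k w : twins e u v -> w != u -> w != v ->
  within e k u w -> within e k v w.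
Proof.
move=> tw; elim: k w => [|k IH] w wu wv /=.
  by rewrite eq_sym (negbTE wu) eq_sym (negbTE wv).
case/orP => [/IH -> // | /existsP[x /andP[ux exw]]].
case: (eqVneq x u) exw => [-> euw | xu exw].
  by apply: within_edge; rewrite -(twins_edge tw).
case: (eqVneq x v) exw => [-> | xv exw]; first exact: within_edge.
by apply/orP; right; apply/existsP; exists x; rewrite exw IH.
Qed.

Lemma dist_twins u v w : twins e u v -> w != u -> w != v -> dist e u w = dist e v w.
Proof.
move=> tw wu wv; apply: eq_find => k.
by apply/idP/idP; apply: twins_within; rewrite // twinsC.
Qed.

Lemma dist_set_twins u v (S : {set T}) : twins e u v ->
  (u \in S) = (v \in S) -> dist_set e u S = dist_set e v S.
Proof.
move=> tw uSvS; have [uS|uS] := boolP (u \in S).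
  by rewrite !dist_set_in // -uSvS.
have vS : v \notin S by rewrite -uSvS.
by apply: eq_bigr => w wS; apply: dist_twins => //; [move: uS | move: vS];
  apply: contraNneq => <-.
Qed.

Lemma twins_common_nbr (W : {set T}) x u : {in W &, forall v w, twins e v w} ->
  x \notin W -> u \in W -> e u x -> {in W, forall w, e w x}.
Proof.
move=> twW xW uW eux w wW.
by rewrite -(twins_edge (twW u w uW wW)) //; apply: contraNneq xW => ->.
Qed.

Lemma twin_number_ge (S : {set T}) u : u \in S -> {in S, forall v, twins e u v} ->
  #|S| <= twin_number e.
Proof.
move=> uS twS; apply: leq_trans (leq_bigmax u); apply: subset_leq_card.
by apply/subsetP => v vS; rewrite inE twS.
Qed.

Lemma twin_number_lt_card : irreflexive e -> twin_number e < #|T| ->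
  exists x y, x != y /\ ~~ e x y.
Proof.
move=> e_irr tau_lt; case: (boolP [exists x, exists y, (x != y) && ~~ e x y]).
  by case/existsP => x /existsP[y /andP[xy nexy]]; exists x, y.
move=> /existsPn complete; have [x0 _] : exists x0, x0 \in [set: T].
  by apply/card_gt0P; rewrite cardsT; apply: leq_ltn_trans tau_lt.
have adj x y : x != y -> e x y.
  by move=> xy; move/existsPn: (complete x) => /(_ y); rewrite xy negbK.
suff : #|[set: T]| <= twin_number e by rewrite cardsT leqNgt tau_lt.
apply: (twin_number_ge (in_setT x0)) => v _; apply/twinsP => // w wx0 wv.
by rewrite !adj // eq_sym.
Qed.

End Twins.

Definition identify (T : eqType) (a b x : T) : T := if x == b then a else x.

Section Identify.
Variables (T : eqType) (a b : T).

Lemma identify_fixed x : x != b -> identify a b x = x.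
Proof. by rewrite /identify => /negbTE->. Qed.

Lemma identify_neq x z : a != z -> x != z -> identify a b x != z.
Proof. by rewrite /identify; case: ifP. Qed.

Lemma identify_neqb x : a != b -> identify a b x != b.
Proof. by rewrite /identify; case: (eqVneq x b). Qed.

Lemma identify_eq x y : y != a -> identify a b x = y -> x = y.
Proof. by rewrite /identify; case: (eqVneq x b) => // _ ya ay; rewrite ay eqxx in ya. Qed.

Lemma identify_fiber u v : u != v -> identify a b u = identify a b v ->
  (u == a) && (v == b) || (u == b) && (v == a).
Proof.
rewrite /identify; case: (eqVneq u b) => [-> | ub]; case: (eqVneq v b) => [-> | vb] //=.
- by move=> _ ->; rewrite eqxx orbT.
- by move=> _ ->; rewrite eqxx.
- by move=> uv uv'; rewrite uv' eqxx in uv.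
Qed.

End Identify.

Section Locating.
Variables (T : finType) (e : rel T).

Lemma locatingP P u v : locating e P -> u != v ->
  exists2 S, S \in P & dist_set e u S != dist_set e v S.
Proof.
case/andP => _ /forallP/(_ u)/forallP/(_ v)/implyP separates uv.
by case/existsP: (separates uv) => S /andP[SP dS]; exists S.
Qed.

Lemma pblock_eq_mem P (S : {set T}) u v : partition P [set: T] -> S \in P ->
  pblock P u = pblock P v -> (u \in S) = (v \in S).
Proof.
move=> /and3P[/eqP coverP trivP _] SP uv.
have in_pblock x : x \in pblock P x by rewrite mem_pblock coverP inE.
apply/idP/idP => [uS | vS].
  by rewrite -(def_pblock trivP SP uS) uv.
by rewrite -(def_pblock trivP SP vS) -uv.
Qed.

Lemma locating_twins_pblock P (W : {set T}) : locating e P ->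
  {in W &, forall u v, twins e u v} -> {in W &, injective (pblock P)}.
Proof.
move=> locP twW u v uW vW uv; apply/eqP; apply: contraT => /(locatingP locP).
case=> S SP; rewrite (dist_set_twins (twW u v uW vW)) ?eqxx //.
by apply: pblock_eq_mem SP uv; case/andP: locP.
Qed.

Lemma card_twins_le_locating P (W : {set T}) : locating e P ->
  {in W &, forall u v, twins e u v} -> #|W| <= #|P|.
Proof.
move=> locP twW; rewrite -(card_in_imset (locating_twins_pblock locP twW)).
apply: subset_leq_card; apply/subsetP => _ /imsetP[x _ ->].
case/andP: locP => /and3P[/eqP coverP _ _] _.
by apply: pblock_mem; rewrite coverP inE.
Qed.

Lemma card_locating P : locating e P -> #|P| <= #|T|.
Proof.
case/andP => partP _; rewrite -(preim_partition_pblock partP) -cardsT.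
exact: leq_imset_card.
Qed.

Lemma locating_preim (rT : eqType) (f : T -> rT) :
  (forall u v, u != v -> f u = f v ->
     exists2 w, (forall y, f y = f w -> y = w) & e u w != e v w) ->
  locating e (preim_partition f [set: T]).
Proof.
move=> separated; apply/andP; split; first exact: preim_partitionP.
apply/forallP => u; apply/forallP => v; apply/implyP => uv.
have fiberP x : [set y in [set: T] | f x == f y] \in preim_partition f [set: T].
  by apply/imsetP; exists x.
have [fuv | fuv] := eqVneq (f u) (f v); last first.
  apply/existsP; exists [set y in [set: T] | f u == f y]; rewrite fiberP /=.
  by rewrite dist_set_in ?inE ?eqxx // eq_sym -lt0n dist_set_gt0 // !inE fuv.
have [w w_single euvw] := separated u v uv fuv.
have fiber_w : [set y in [set: T] | f w == f y] = [set w].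
  by apply/setP => y; rewrite !inE; apply/eqP/eqP => [/esym/w_single | ->].
have uw : u != w by move: (uv); apply: contraNneq => uw; rewrite uw (w_single v) // -fuv uw.
have vw : v != w by move: uv; apply: contraNneq => vw; rewrite vw (w_single u) // fuv vw.
apply/existsP; exists [set w]; rewrite -{1}fiber_w fiberP /= !dist_set1.
case euw: (e u w) euvw; case evw: (e v w) => //= _.
  by rewrite (dist_edge uw euw) neq_ltn (dist_gt1 vw (negbT evw)).
by rewrite (dist_edge vw evw) neq_ltn (dist_gt1 uw (negbT euw)) orbT.
Qed.

Lemma card_preim_partition (rT : finType) (f : T -> rT) :
  #|preim_partition f [set: T]| <= #|f @: [set: T]|.
Proof.
have -> : preim_partition f [set: T] =
    (fun a => [set y in [set: T] | a == f y]) @: (f @: [set: T]).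
  by rewrite -imset_comp.
exact: leq_imset_card.
Qed.

Lemma beta_p_le P : locating e P -> beta_p e <= #|P|.
Proof.
move=> locP; rewrite leqNgt; apply/negP => lt_P.
have := before_find 0 lt_P; rewrite nth_iota ?ltnS ?card_locating // add0n.
by move/negbT/negP; apply; apply/existsP; exists P; rewrite locP eqxx.
Qed.

Lemma beta_p_spec : exists2 P, locating e P & #|P| = beta_p e.
Proof.
have singletons : locating e (preim_partition id [set: T]).
  by apply: locating_preim => u v uv uv'; rewrite uv' eqxx in uv.
have has_k : has (fun k => [exists P, locating e P && (#|P| == k)]) (iota 0 #|T|.+1).
  apply/hasP; exists #|preim_partition id [set: T]|.
    by rewrite mem_iota ltnS card_locating.
  by apply/existsP; exists (preim_partition id [set: T]); rewrite singletons eqxx.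
have beta_lt : beta_p e < #|T|.+1.
  by rewrite -[X in _ < X](size_iota 0) -has_find.
have := nth_find 0 has_k; rewrite -/(beta_p e) nth_iota // add0n.
by case/existsP => P /andP[locP /eqP cardP]; exists P.
Qed.

Lemma card_twins_le_beta_p (W : {set T}) : {in W &, forall u v, twins e u v} ->
  #|W| <= beta_p e.
Proof. by move=> twW; have [P locP <-] := beta_p_spec; exact: card_twins_le_locating. Qed.

Lemma beta_p_le_pred a b w : a != b -> w \notin [:: a; b] -> e a w != e b w ->
  beta_p e <= #|T| - 1.
Proof.
move=> ab; rewrite !inE negb_or => /andP[wa wb] eabw.
have locP : locating e (preim_partition (identify a b) [set: T]).
  apply: locating_preim => u v uv /(identify_fiber uv) uv_ab.
  exists w; first by move=> y; rewrite [identify a b w]identify_fixed //; exact: identify_eq.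
  by case/orP: uv_ab => /andP[/eqP-> /eqP->]; rewrite // eq_sym.
apply: leq_trans (beta_p_le locP) _; apply: leq_trans (card_preim_partition _) _.
rewrite subn1 -(cardsC1 b); apply: subset_leq_card; apply/subsetP => _ /imsetP[x _ ->].
by rewrite !inE identify_neqb.
Qed.

Lemma beta_p_le_subn2 a b c d w1 w2 : uniq [:: a; b; c; d] ->
  w1 \notin [:: a; b; c; d] -> w2 \notin [:: a; b; c; d] ->
  e a w1 != e b w1 -> e c w2 != e d w2 -> beta_p e <= #|T| - 2.
Proof.
rewrite /= !inE !negb_or -!andbA => /and5P[ab ac ad bc /and3P[bd cd _]].
move=> /and4P[w1a w1b w1c w1d] /and4P[w2a w2b w2c w2d] eabw1 ecdw2.
set f := identify a b \o identify c d.
have single w : w != a -> w != b -> w != c -> w != d -> forall y, f y = f w -> y = w.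
  move=> wa wb wc wd y; rewrite /f /= [identify c d w]identify_fixed //.
  rewrite [identify a b w]identify_fixed //.
  by move/identify_eq => /(_ wa)/identify_eq; apply.
have locP : locating e (preim_partition f [set: T]).
  apply: locating_preim => u v uv fuv.
  have [cd_uv | cd_uv] := eqVneq (identify c d u) (identify c d v).
    exists w2; first exact: single.
    by case/orP: (identify_fiber uv cd_uv) => /andP[/eqP-> /eqP->]; rewrite // eq_sym.
  exists w1; first exact: single.
  case/orP: (identify_fiber cd_uv fuv) => /andP[/eqP/identify_eq uE /eqP/identify_eq vE].
    by rewrite uE // vE.
  by rewrite uE // vE // eq_sym.
apply: leq_trans (beta_p_le locP) _; apply: leq_trans (card_preim_partition _) _.
have /subset_leq_card : f @: [set: T] \subset ~: [set b; d].
  apply/subsetP => _ /imsetP[x _ ->]; rewrite !inE negb_or /f /=.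
  by rewrite identify_neqb // identify_neq // identify_neqb.
by rewrite cardsC2.
Qed.

End Locating.

Lemma twin_clique_tau (T : finType) (e : rel T) (W X : {set T}) :
  4 < #|T| -> tau_set e W -> #|X| = #|T| - 2 ->
  {in X &, forall u v, twins e u v} -> {in X &, forall u v, u != v -> e u v} ->
  (forall w u, w \notin X -> u \in X -> ~~ twins e w u) ->
  twin_number e = #|T| - 2 /\ induces_complete e W.
Proof.
move=> card_T [twW cardW] cardX twX cliqueX sepX.
have [x0 x0X] : exists x0, x0 \in X by apply/card_gt0P; rewrite cardX; lia.
have tau_ge : #|X| <= twin_number e.
  by apply: (twin_number_ge x0X) => v vX; exact: twX.
have WX : W \subset X.
  apply/subsetP => w wW; apply: contraT => wX.
  have /card_gt0P[u /setIP[uW uX]] : 0 < #|W :&: X|.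
    have : #|W :|: X| <= #|T| by exact: max_card.
    by have := cardsUI W X; lia.
  by have := sepX w u wX uX; rewrite twW.
have := subset_leq_card WX; split; first lia.
by move=> u v uW vW; apply: cliqueX; apply: (subsetP WX).
Qed.

Section SimpleGraph.
Variables (T : finType) (e : rel T).
Hypotheses (e_sym : symmetric e) (e_irr : irreflexive e) (e_conn : graph_connected e).

Lemma edge_neq x y : e x y -> x != y.
Proof. by apply: contraTneq => ->; rewrite e_irr. Qed.

Lemma exists_edge_out (A : {set T}) x y : x \in A -> y \notin A ->
  exists u v, [/\ u \in A, v \notin A & e u v].
Proof.
move=> xA yA; case: (boolP [exists u, exists v, [&& u \in A, v \notin A & e u v]]).
  by case/existsP => u /existsP[v /and3P[uA vA euv]]; exists u, v.
move=> /existsPn no_out; have A_closed : closed e A.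
  have stay u v : e u v -> u \in A -> v \in A.
    move=> euv uA; apply: contraT => vA.
    by move/existsPn: (no_out u) => /(_ v); rewrite uA vA euv.
  by move=> u v euv; apply/idP/idP; apply: stay; rewrite // e_sym.
by move: yA; rewrite -(closed_connect A_closed (e_conn x y)) xA.
Qed.

Lemma beta_p_le_pred_of_twin_number : twin_number e < #|T| -> beta_p e <= #|T| - 1.
Proof.
move=> /(twin_number_lt_card e_irr)[x [z [xz nexz]]].
have zA : z \notin x |: nbhd e x by rewrite !inE negb_or eq_sym xz.
have [u [v [uA vA euv]]] := exists_edge_out (setU11 x _) zA.
move: vA; rewrite !inE negb_or => /andP[vx nexv].
have exu : e x u.
  by case/setU1P: uA euv => [-> exv | ]; [rewrite exv in nexv | rewrite inE].
apply: (@beta_p_le_pred _ _ x u v (edge_neq exu)).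
  by rewrite !inE negb_or vx eq_sym edge_neq.
by rewrite (negbTE nexv) euv.
Qed.

Lemma twin_clique_lt_beta_p (W : {set T}) : {in W &, forall u v, twins e u v} ->
  {in W &, forall u v, u != v -> e u v} -> 0 < #|W| < #|T| -> #|W| < beta_p e.
Proof.
move=> twW cliqueW /andP[/card_gt0P[w0 w0W] W_small].
have [y] : exists y, y \notin enum W by apply: exists_notin; rewrite -cardE.
rewrite mem_enum => yW; have [u [x [uW xW eux]]] := exists_edge_out w0W yW.
have x_nbr := twins_common_nbr twW xW uW eux.
have [P locP <-] := beta_p_spec e.
rewrite ltn_neqAle (card_twins_le_locating locP twW) andbT; apply/eqP => cardWP.
have [/and3P[/eqP coverP trivP _] _] := andP locP.
have pblock_inj := locating_twins_pblock locP twW.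
have in_pblock z : z \in pblock P z by rewrite mem_pblock coverP inE.
(* Equality of cardinalities makes each block contain exactly one vertex of W. *)
have imageW : pblock P @: W = P.
  apply/eqP; rewrite eqEcard card_in_imset // cardWP leqnn andbT.
  by apply/subsetP => _ /imsetP[w _ ->]; apply: pblock_mem; rewrite coverP inE.
have : pblock P x \in pblock P @: W by rewrite imageW pblock_mem // coverP inE.
case/imsetP => w1 w1W x_w1.
have xw1 : x != w1 by apply: contraNneq xW => ->.
have [S] := locatingP locP xw1; rewrite -imageW => /imsetP[w wW ->].
apply/negP; rewrite negbK; apply/eqP.
have [ww1 | ww1] := eqVneq w w1.
  subst w1; have xw : x \in pblock P w by rewrite -x_w1.
  by rewrite !dist_set_in ?in_pblock.
have w1_out : w1 \notin pblock P w.
  by apply: contra ww1 => /(same_pblock trivP)/(pblock_inj _ _ w1W wW) ->.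
have x_out : x \notin pblock P w.
  apply: contra ww1 => /(same_pblock trivP).
  by rewrite x_w1 => /(pblock_inj _ _ w1W wW) ->.
have exw : e x w by rewrite e_sym x_nbr.
have ew1w : e w1 w by rewrite cliqueW // eq_sym.
by rewrite (dist_set_edge x_out (in_pblock w) exw) (dist_set_edge w1_out _ ew1w).
Qed.

Lemma has_nbr x : 1 < #|T| -> exists y, e x y.
Proof.
move=> card_T; have [y] : exists y, y \notin [:: x] by exact: exists_notin.
rewrite inE => /negPf yx; have {}yx : y \notin [set x] by rewrite inE yx.
by have [u [v [/set1P-> _ exv]]] := exists_edge_out (set11 x) yx; exists v.
Qed.

Section LargeBeta.
Hypotheses (card_T : 5 < #|T|) (beta_large : #|T| - 1 <= beta_p e).

Lemma not_two_separated_pairs a b c d w1 w2 : uniq [:: a; b; c; d] ->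
  w1 \notin [:: a; b; c; d] -> w2 \notin [:: a; b; c; d] ->
  e a w1 != e b w1 -> e c w2 != e d w2 -> False.
Proof. by move=> abcd w1_out w2_out /(beta_p_le_subn2 abcd w1_out w2_out) /[apply]; lia. Qed.

Lemma not_two_nbrs_two_non_nbrs z x1 x2 y1 y2 : x1 != x2 -> e z x1 -> e z x2 ->
  y1 != y2 -> y1 != z -> y2 != z -> ~~ e z y1 -> ~~ e z y2 -> False.
Proof.
move=> x12 zx1 zx2 y12 y1z y2z zy1 zy2.
have xy x y : e z x -> ~~ e z y -> x != y by move=> zx zy; apply: contraNneq zy => <-.
have z_out : z \notin [:: x1; y1; x2; y2].
  by rewrite !inE !negb_or (edge_neq zx1) (edge_neq zx2) ![z == _]eq_sym y1z y2z.
apply: (@not_two_separated_pairs x1 y1 x2 y2 z z) => //.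
- rewrite /= !inE !negb_or x12 y12 (xy x1 y1) // (xy x1 y2) // (xy x2 y2) //.
  by rewrite [y1 == x2]eq_sym (xy x2 y1).
- by rewrite !(e_sym _ z) zx1 (negbTE zy1).
by rewrite !(e_sym _ z) zx2 (negbTE zy2).
Qed.

Lemma eq_nbrs z x1 x2 y1 y2 : x1 != x2 -> x1 != z -> x2 != z ->
  ~~ e z x1 -> ~~ e z x2 -> e z y1 -> e z y2 -> y1 = y2.
Proof.
move=> x12 x1z x2z zx1 zx2 zy1 zy2; apply/eqP; apply: contraT => y12.
by case: (not_two_nbrs_two_non_nbrs y12 zy1 zy2 x12 x1z x2z zx1 zx2).
Qed.

Lemma eq_non_nbrs z x1 x2 y1 y2 : x1 != x2 -> e z x1 -> e z x2 ->
  y1 != z -> y2 != z -> ~~ e z y1 -> ~~ e z y2 -> y1 = y2.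
Proof.
move=> x12 zx1 zx2 y1z y2z zy1 zy2; apply/eqP; apply: contraT => y12.
by case: (not_two_nbrs_two_non_nbrs x12 zx1 zx2 y12 y1z y2z zy1 zy2).
Qed.

Section Leaf.
Variables l h : T.
Hypotheses (l_leaf : forall y, e l y -> y = h) (elh : e l h).

Lemma leaf_non_nbr y : y != h -> ~~ e y l.
Proof. by move=> yh; apply: contraNN yh => eyl; apply/eqP/l_leaf; rewrite e_sym. Qed.

Lemma leaf_nbr_dominating z : z != h -> e h z.
Proof.
have lh := edge_neq elh; have ehl : e h l by rewrite e_sym.
have [m ml ehm] : exists2 m, m != l & e h m.
  have [y] : exists y, y \notin [:: l; h] by apply: exists_notin; apply: leq_trans card_T.
  rewrite !inE => y_out; have {}y_out : y \notin [set l; h] by rewrite !inE.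
  have [u [v [uA vA euv]]] := exists_edge_out (setU11 l [set h]) y_out.
  exists v; first by apply: contraNneq vA => ->; rewrite !inE eqxx.
  by case/set2P: uA euv => -> // /l_leaf vh; rewrite vh !inE eqxx orbT in vA.
have h_non_nbr x y : x != h -> ~~ e h x -> y != h -> ~~ e h y -> x = y.
  by move=> xh nehx yh nehy; apply: (eq_non_nbrs _ ehl ehm) => //; rewrite eq_sym.
move=> zh; apply: contraT => nehz.
have [g ezg] : exists g, e z g by apply: has_nbr; lia.
have z_leaf y : e z y -> y = g.
  move=> ezy; apply: (eq_nbrs lh _ _ (leaf_non_nbr zh) _ ezy ezg).
  - by apply: contraNneq nehz => <-.
  - by rewrite eq_sym.
  - by rewrite e_sym.
have gh : g != h by apply: contraTneq ezg => ->; rewrite e_sym.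
have gl : g != l by apply: contraTneq ezg => ->; exact: leaf_non_nbr zh.
have ehg : e h g.
  by apply: contraT => nehg; move: ezg; rewrite -(h_non_nbr g z) ?e_irr.
have g_non_nbr x y : x != g -> y != g -> ~~ e g x -> ~~ e g y -> x = y.
  by apply: (eq_non_nbrs zh); rewrite e_sym.
have [y] : exists y, y \notin [:: l; h; z; g] by apply: exists_notin; apply: ltnW.
rewrite !inE !negb_or => /and4P[yl yh yz yg].
have ehy : e h y by apply: contraT => nehy; move: yz; rewrite (h_non_nbr y z) ?eqxx.
have neyz : ~~ e y z by apply: contraNN yg => eyz; rewrite (z_leaf y) // e_sym.
have neyg : ~~ e y g.
  apply: contraNN gh => eyg; apply/eqP.
  apply: (eq_nbrs _ _ _ (leaf_non_nbr yh) neyz eyg); last by rewrite e_sym.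
  - by apply: contraNneq nehz => <-.
  - by rewrite eq_sym.
  - by rewrite eq_sym.
have negl : ~~ e g l by exact: leaf_non_nbr gh.
by move: yl; rewrite (g_non_nbr l y) ?eqxx //; [rewrite eq_sym | rewrite e_sym].
Qed.

Lemma star_twin_number : (forall z y, z != h -> e z y -> y = h) ->
  #|T| - 1 <= twin_number e.
Proof.
move=> star; have nbr_h z y : z != h -> e z y = (y == h).
  move=> zh; apply/idP/eqP => [/(star _ _ zh) // | ->].
  by rewrite e_sym leaf_nbr_dominating.
have lS : l \in ~: [set h] by rewrite !inE edge_neq.
rewrite subn1 -(cardsC1 h); apply: (twin_number_ge lS) => v; rewrite !inE => vh.
by apply/twinsP => // w wl wv; rewrite !nbr_h // edge_neq.
Qed.

Lemma leaf_clique_nbr c m : c != h -> m != h -> e c m ->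
  forall u y, u \in ~: [set l; h] -> e u y = (y != u) && (y != l).
Proof.
move=> ch mh ecm; have ech : e c h by rewrite e_sym leaf_nbr_dominating.
have cl : l != c.
  by apply: contraTneq ecm => <-; apply: contraNN mh => /l_leaf ->.
have c_nbr y : y != c -> y != l -> e c y.
  move=> yc yl; apply: contraT => necy; move: yl.
  by rewrite (eq_non_nbrs mh ecm ech yc cl necy (leaf_non_nbr ch)) eqxx.
move=> u y; rewrite !inE negb_or => /andP[ul uh].
apply/idP/andP => [euy | [yu yl]].
  split; first by rewrite eq_sym edge_neq.
  by apply: contraTneq euy => ->; exact: leaf_non_nbr uh.
have [uc | uc] := eqVneq u c; first by subst u; exact: c_nbr.
have euc : e u c by rewrite e_sym c_nbr.
have euh : e u h by rewrite e_sym leaf_nbr_dominating.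
apply: contraT => neuy; move: yl.
by rewrite (eq_non_nbrs ch euc euh yu _ neuy (leaf_non_nbr uh)) ?eqxx 1?eq_sym.
Qed.

Lemma leaf_twin_structure W : tau_set e W -> twin_number e <= #|T| - 1 ->
  twin_number e = #|T| - 1 \/ (twin_number e = #|T| - 2 /\ induces_complete e W).
Proof.
move=> tW tau_le; have lh := edge_neq elh.
case: (boolP [exists c, exists m, [&& c != h, m != h & e c m]]); last first.
  move=> /existsPn not_star; left; apply/eqP; rewrite eqn_leq tau_le star_twin_number //.
  move=> z y zh ezy; apply/eqP; apply: contraTT ezy => yh.
  by move/existsPn: (not_star z) => /(_ y); rewrite zh yh.
case/existsP => c /existsP[m /and3P[ch mh ecm]].
have X_nbr := leaf_clique_nbr ch mh ecm.
right; apply: (twin_clique_tau _ tW (cardsC2 lh)); first exact: ltnW.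
- by move=> u v uX vX; apply/twinsP => // w wu wv; rewrite !X_nbr // wu wv.
- move=> u v uX vX uv; rewrite X_nbr // eq_sym uv.
  by move: vX; rewrite !inE negb_or => /andP[].
move=> w u w_out uX; apply/negP => tw.
have [ul uh] : u != l /\ u != h by move: uX; rewrite !inE negb_or => /andP[].
move: w_out; rewrite !inE negbK => /orP[] /eqP wE; subst w.
  have [x] : exists x, x \notin [:: l; h; u] by apply: exists_notin; apply: leq_trans card_T.
  rewrite !inE !negb_or => /and3P[xl xh xu].
  have := twins_edge tw xl xu; rewrite (X_nbr u x uX) xu xl.
  by rewrite e_sym (negbTE (leaf_non_nbr xh)).
have lu : l != u by rewrite eq_sym.
by have := twins_edge tw lh lu; rewrite e_sym elh (X_nbr u l uX) eqxx andbF.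
Qed.

End Leaf.

Section Dense.
Hypothesis one_non_nbr : forall z x y, x != z -> ~~ e z x -> y != z -> y != x -> e z y.

Lemma non_edge_meets a a' b b' : a != a' -> ~~ e a a' -> b' != b -> ~~ e b b' ->
  b \in [:: a; a'].
Proof.
move=> aa' naa' b'b nbb'; apply: contraT; rewrite !inE negb_or => /andP[ba ba'].
have a'a : a' != a by rewrite eq_sym.
have na'a : ~~ e a' a by rewrite e_sym.
have a_nbr y : y != a -> y != a' -> e a y := @one_non_nbr a a' y a'a naa'.
have a'_nbr y : y != a' -> y != a -> e a' y := @one_non_nbr a' a y aa' na'a.
have b'a : b' != a by apply: contraNneq nbb' => ->; rewrite e_sym a_nbr.
have b'a' : b' != a' by apply: contraNneq nbb' => ->; rewrite e_sym a'_nbr.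
have [u1] : exists u1, u1 \notin [:: a; a'; b; b'] by apply: exists_notin; apply: ltnW.
rewrite !inE !negb_or => /and4P[u1a u1a' u1b u1b'].
have [u2] : exists u2, u2 \notin [:: u1; a; a'; b; b'] by exact: exists_notin.
rewrite !inE !negb_or => /and5P[u2u1 u2a u2a' u2b u2b'].
have eb'u2 : e b' u2.
  by apply: (@one_non_nbr b' b u2) => //; [rewrite eq_sym | rewrite e_sym].
case: (@not_two_separated_pairs u1 a u2 b a' b').
- rewrite /= !inE !negb_or u1a u1b u2b [u1 == u2]eq_sym u2u1.
  by rewrite [a == u2]eq_sym u2a [a == b]eq_sym ba.
- rewrite !inE !negb_or a'a [a' == u1]eq_sym u1a'.
  by rewrite [a' == u2]eq_sym u2a' [a' == b]eq_sym ba'.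
- rewrite !inE !negb_or b'a b'b [b' == u1]eq_sym u1b'.
  by rewrite [b' == u2]eq_sym u2b'.
- by rewrite (negbTE naa') e_sym a'_nbr.
by rewrite (negbTE nbb') e_sym eb'u2.
Qed.

Lemma dense_twin_structure W : tau_set e W -> twin_number e <= #|T| - 1 ->
  twin_number e = #|T| - 2 /\ induces_complete e W.
Proof.
move=> tW tau_le.
have [a [a' [aa' naa']]] : exists a a', a != a' /\ ~~ e a a'.
  by apply: twin_number_lt_card => //; apply: leq_ltn_trans tau_le _; lia.
have X_nbr u y : u \in ~: [set a; a'] -> e u y = (y != u).
  rewrite !inE negb_or => /andP[ua ua']; apply/idP/idP => [/edge_neq | yu].
    by rewrite eq_sym.
  apply: contraT => neuy; have := non_edge_meets aa' naa' yu neuy.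
  by rewrite !inE (negbTE ua) (negbTE ua').
apply: (twin_clique_tau _ tW (cardsC2 aa')); first exact: ltnW.
- by move=> u v uX vX; apply/twinsP => // w wu wv; rewrite !X_nbr // wu wv.
- by move=> u v uX vX uv; rewrite X_nbr // eq_sym.
move=> w u w_out uX; apply/negP => tw.
have [ua ua'] : u != a /\ u != a' by move: uX; rewrite !inE negb_or => /andP[].
move: w_out; rewrite !inE negbK => /orP[] /eqP wE; subst w.
  have a'u : a' != u by rewrite eq_sym.
  have a'a : a' != a by rewrite eq_sym.
  by have := twins_edge tw a'a a'u; rewrite (negbTE naa') (X_nbr u a' uX) a'u.
have au : a != u by rewrite eq_sym.
by have := twins_edge tw aa' au; rewrite e_sym (negbTE naa') (X_nbr u a uX) au.
Qed.

End Dense.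

Lemma large_beta_p_twin_structure W : tau_set e W -> twin_number e <= #|T| - 1 ->
  twin_number e = #|T| - 1 \/ (twin_number e = #|T| - 2 /\ induces_complete e W).
Proof.
move=> tW tau_le.
case: (boolP [exists l, #|nbhd e l| <= 1]).
  case/existsP => l /card_le1_eqP l_leaf.
  have [h elh] : exists h, e l h by apply: has_nbr; lia.
  by apply: (leaf_twin_structure _ elh tW tau_le) => y ely; apply: l_leaf; rewrite inE.
move=> /existsPn big; right; apply: dense_twin_structure tW tau_le => z x y xz nezx yz yx.
apply: contraT => nezy.
have /card_gt1P[y1 [y2 [ey1 ey2 y12]]] : 1 < #|nbhd e z| by rewrite ltnNge big.
rewrite !inE in ey1 ey2.
by move: yx; rewrite (eq_non_nbrs y12 ey1 ey2 yz xz nezy nezx) eqxx.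
Qed.

End LargeBeta.
End SimpleGraph.

Unset Implicit Arguments.

Theorem proposition21 (T : finType) (e : rel T) (W : {set T}) :
  simple_graph e -> graph_connected e -> 9 <= #|T| -> tau_set e W ->
  (beta_p e = #|T| - 1 <->
   (twin_number e = #|T| - 1 \/
    (twin_number e = #|T| - 2 /\ induces_complete e W))).
Proof.
(* Occurrences of [#|T|] reach the goal through different coercion paths
   (via [eqType] or via [finType]); naming them lets [lia] identify them. *)
move=> [e_sym e_irr] e_conn card_T tW; have [twW cardW] := tW; set n := #|T|.
have tau_le_beta : twin_number e <= beta_p e by rewrite -cardW card_twins_le_beta_p.
split => [beta_n1 | tau_cases].
  apply: (large_beta_p_twin_structure e_sym e_irr e_conn _ _ tW); rewrite ?beta_n1 //; lia.
have tau_lt : twin_number e < #|T| by case: tau_cases => [|[]] ->; lia.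
apply/eqP; rewrite eqn_leq (beta_p_le_pred_of_twin_number e_sym e_irr e_conn tau_lt) /=.
case: tau_cases => [<- // | [tau_n2 cliqueW]].
have W_size : 0 < #|W| < #|T| by rewrite cardW tau_n2; apply/andP; split; lia.
by have := twin_clique_lt_beta_p e_sym e_conn twW cliqueW W_size; rewrite cardW tau_n2; lia.
Qed.
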